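(* Let $D$ be an instance all of whose tuples are endogenous, let $\mathcal{Q}$ be a monotone query (defining a view $\mathcal{V}$ with $\mathcal{V}(D)=\mathcal{Q}(D)$), and let $\bar a\in\mathcal{Q}(D)$. Then for $D'\subseteq D$, we have $(D,D',\bar a)\in\mathcal{MSSEP}^{s}(\mathcal{Q})$ if and only if there is $t\in D\smallsetminus D'$ such that $t\in\mathit{Causes}(D,\mathcal{Q}(\bar a))$ and $D\smallsetminus(D'\cup\{t\})\in\mathit{Cont}(D,\mathcal{Q}(\bar a),t)$.
   Context: A query $\mathcal{Q}$ is monotone if $D_1\subseteq D_2$ implies $\mathcal{Q}(D_1)\subseteq\mathcal{Q}(D_2)$; $D\models\mathcal{Q}(\bar a)$ means $\bar a\in\mathcal{Q}(D)$. Here $D^n=D$ (all tuples endogenous). A tuple $\tau\in D^n$ is an actual cause for $\bar a$ if there is $\Gamma\subseteq D^n$ with $D\smallsetminus\Gamma\models\mathcal{Q}(\bar a)$ and $D\smallsetminus(\Gamma\cup\{\tau\})\not\models\mathcal{Q}(\bar a)$; $\mathit{Causes}(D,\mathcal{Q}(\bar a))$ is the set of actual causes. $\mathit{Cont}(D,\mathcal{Q}(\bar a),\tau)$ is the set of $\Lambda\subseteq D^n$ with $D\smallsetminus\Lambda\models\mathcal{Q}(\bar a)$, $D\smallsetminus(\Lambda\cup\{\tau\})\not\models\mathcal{Q}(\bar a)$, and $D\smallsetminus(\Lambda'\cup\{\tau\})\models\mathcal{Q}(\bar a)$ for every $\Lambda'\subsetneq\Lambda$. $\mathcal{MSSEP}^{s}(\mathcal{Q})$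 is the set of triples $(D,D',\bar a)$ with $\bar a\in\mathcal{Q}(D)$, $D'\subseteq D$, $\bar a\notin\mathcal{Q}(D')$, and $D'$ subset-maximal among subsets of $D$ with this last property (minimal source-side-effect). *)

From mathcomp Require Import all_boot.
Set Implicit Arguments. Unset Strict Implicit. Unset Printing Implicit Defensive.

(* Tuples (facts) range over a finite type T; a database instance is a
   finite set of facts D : {set T}. A query Q maps an instance to the set of
   its answers: [Q D a] means D |= Q(a). All tuples are endogenous (D^n = D). *)

Definition monotone (T : finType) (Ans : Type) (Q : {set T} -> Ans -> bool) :=
  forall D1 D2 : {set T}, D1 \subset D2 -> forall a, Q D1 a -> Q D2 a.

Definition is_cause (T : finType) (Ans : Type) (Q : {set T} -> Ans -> bool)
  (D : {set T}) (a : Ans) (tau : T) : Prop :=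
  tau \in D /\
  exists Gamma : {set T}, Gamma \subset D /\
    Q (D :\: Gamma) a /\ ~~ Q (D :\: (Gamma :|: [set tau])) a.

Definition Causes (T : finType) (Ans : Type) (Q : {set T} -> Ans -> bool)
  (D : {set T}) (a : Ans) : T -> Prop := is_cause Q D a.

Definition Cont (T : finType) (Ans : Type) (Q : {set T} -> Ans -> bool)
  (D : {set T}) (a : Ans) (tau : T) (Lambda : {set T}) : Prop :=
  Lambda \subset D /\
  Q (D :\: Lambda) a /\ ~~ Q (D :\: (Lambda :|: [set tau])) a /\
  forall Lambda' : {set T}, Lambda' \proper Lambda ->
    Q (D :\: (Lambda' :|: [set tau])) a.

Definition MSSEP (T : finType) (Ans : Type) (Q : {set T} -> Ans -> bool)
  (D D' : {set T}) (a : Ans) : Prop :=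
  Q D a /\ D' \subset D /\ ~~ Q D' a /\
  forall D'' : {set T}, D' \subset D'' -> D'' \subset D -> ~~ Q D'' a -> D'' = D'.

From mathcomp Require Import all_boot.
Set Implicit Arguments. Unset Strict Implicit. Unset Printing Implicit Defensive.

(* Complementation X |-> D :\: X reverses inclusion among subsets of D. For
   t in D :\: D' it sends D' :|: [set t] to Lambda = D :\: (D' :|: [set t]),
   and the supersets of D' avoiding t to the subsets of Lambda. So D' is a
   maximal non-answer exactly when Lambda is a minimal contingency set for t;
   monotonicity is needed only to rule out supersets of D' containing t. *)

Lemma setD_setDK (T : finType) (D X : {set T}) : X \subset D -> D :\: (D :\: X) = X.
Proof. by move=> /setIidPr sXD; rewrite setDDr setDv set0U. Qed.

Lemma setD_setDU1K (T : finType) (D X : {set T}) (t : T) :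
  X \subset D -> t \notin X -> D :\: ((D :\: (X :|: [set t])) :|: [set t]) = X.
Proof.
move=> /subsetP sXD tX; apply/setP=> y; rewrite !inE.
have [->|_] := eqVneq y t; first by rewrite (negbTE tX).
by case: (boolP (y \in X)) => [/sXD ->|_] //=; case: (y \in D).
Qed.

Lemma cont_cause (T : finType) (Ans : Type) (Q : {set T} -> Ans -> bool)
    (D : {set T}) (a : Ans) (t : T) (Lambda : {set T}) :
  t \in D -> Cont Q D a t Lambda -> Causes Q D a t.
Proof. by move=> tD [sLD [QL [nQLt _]]]; split=> //; exists Lambda. Qed.

Section MaximalNonAnswers.

Variables (T : finType) (Ans : Type) (Q : {set T} -> Ans -> bool).
Variables (D : {set T}) (a : Ans).

Definition maximal_nonanswer (D' : {set T}) :=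
  forall D'' : {set T}, D' \subset D'' -> D'' \subset D -> ~~ Q D'' a -> D'' = D'.

Definition minimal_contingency (t : T) (Lambda : {set T}) :=
  forall Lambda' : {set T}, Lambda' \proper Lambda ->
    Q (D :\: (Lambda' :|: [set t])) a.

Lemma mssep_proper (D' : {set T}) : MSSEP Q D D' a -> D' \proper D.
Proof.
case=> QD [sD'D [nQD' _]]; rewrite properEneq sD'D andbT.
by apply: contraNneq nQD' => ->.
Qed.

Lemma maximal_nonanswer_setU1 (D' : {set T}) (t : T) :
  D' \subset D -> t \in D :\: D' -> maximal_nonanswer D' -> Q (D' :|: [set t]) a.
Proof.
move=> sD'D; rewrite inE => /andP [tD' tD] maxD'; apply/negPn/negP=> nQ.
have sD't : D' :|: [set t] \subset D by rewrite subUset sub1set tD sD'D.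
have := maxD' _ (subsetUl _ _) sD't nQ.
by move/setP/(_ t); rewrite !inE eqxx orbT (negbTE tD').
Qed.

Lemma maximal_nonanswer_minimal_contingency (D' : {set T}) (t : T) :
  D' \subset D -> t \in D :\: D' -> maximal_nonanswer D' ->
  minimal_contingency t (D :\: (D' :|: [set t])).
Proof.
move=> sD'D; rewrite inE => /andP [tD' _] maxD' L' /properP [sL'L [x xL xL']].
apply/negPn/negP => nQ.
have sD'DL' : D' \subset D :\: (L' :|: [set t]).
  apply/subsetP=> y yD'; rewrite !inE (subsetP sD'D _ yD') andbT negb_or.
  apply/andP; split; last by apply: contraNneq tD' => <-.
  by apply: contraL yD' => /(subsetP sL'L); rewrite !inE negb_or => /andP [/andP []].
have := maxD' _ sD'DL' (subsetDl _ _) nQ.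
move: xL; rewrite !inE negb_or => /andP [/andP [xD' xt] xD].
by move/setP/(_ x); rewrite !inE (negbTE xD') (negbTE xt) (negbTE xL') xD.
Qed.

Lemma minimal_contingency_maximal_nonanswer (D' : {set T}) (t : T) :
  monotone Q -> D' \subset D -> t \in D :\: D' -> Q (D' :|: [set t]) a ->
  minimal_contingency t (D :\: (D' :|: [set t])) -> maximal_nonanswer D'.
Proof.
move=> monQ sD'D; rewrite inE => /andP [tD' _] QD't minL D'' sD'D'' sD''D nQ.
have tD'' : t \notin D''.
  apply: contraNN nQ => tD''; apply: monQ QD't.
  by rewrite subUset sub1set tD'' sD'D''.
apply/eqP; rewrite eqEsubset sD'D'' andbT; apply/negPn/negP => nsD''D'.
apply: (negP nQ); rewrite -(setD_setDU1K sD''D tD'').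
apply: minL; apply/properP; split; first by apply/setDS/setSU.
have [x xD'' xD'] := subsetPn nsD''D'.
exists x; last by rewrite !inE xD''.
rewrite !inE (subsetP sD''D _ xD'') (negbTE xD') andbT /=.
by apply: contraNneq tD'' => <-.
Qed.

End MaximalNonAnswers.

Theorem proposition7 (T : finType) (Ans : Type) (Q : {set T} -> Ans -> bool)
  (D : {set T}) (a : Ans) :
  monotone Q -> Q D a ->
  forall D' : {set T}, D' \subset D ->
    (MSSEP Q D D' a <->
     exists2 t, t \in D :\: D' &
       Causes Q D a t /\ Cont Q D a t (D :\: (D' :|: [set t]))).
Proof.
move=> monQ QD D' sD'D.
have sD'tD t : t \in D -> D' :|: [set t] \subset D.
  by move=> tD; rewrite subUset sub1set tD sD'D.
split.
- move=> mssep; have [_ [_ [nQD' maxD']]] := mssep.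
  have /properP [_ [t tD tD']] := mssep_proper mssep.
  have tDD' : t \in D :\: D' by rewrite inE tD' tD.
  have cont : Cont Q D a t (D :\: (D' :|: [set t])).
    rewrite /Cont setD_setDK ?sD'tD // setD_setDU1K //.
    split; first exact: subsetDl.
    split; first exact: (maximal_nonanswer_setU1 sD'D tDD' maxD').
    by split=> //; apply: (maximal_nonanswer_minimal_contingency sD'D tDD').
  by exists t => //; split=> //; apply: cont_cause cont.
- case=> t tDD' [_ [_ [QD't [nQD' minL]]]].
  move: (tDD'); rewrite inE => /andP [tD' tD].
  rewrite setD_setDK ?sD'tD // in QD't.
  rewrite setD_setDU1K // in nQD'.
  split=> //; split=> //; split=> //.
  exact: minimal_contingency_maximal_nonanswer minL.
Qed.
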